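(* Let $\mathcal{H}$ be a complex Hilbert space, let $T\in\mathbb{B}(\mathcal{H})$ and let $N(\cdot)$ be an algebra norm on $\mathbb{B}(\mathcal{H})$. Then $$\frac{N\big(TT^* + T^*T\big)}{4} + \frac{1}{2}\sup_{\varphi \in \mathbb{R}}\Big|N^2\big({\rm Re}(e^{i\varphi}T)\big) - N^2\big({\rm Im}(e^{i\varphi}T)\big)\Big| \leq w^2_{N}(T).$$
   Context: $\mathbb{B}(\mathcal{H})$ is the algebra of bounded linear operators on $\mathcal{H}$. A norm $N(\cdot)$ on $\mathbb{B}(\mathcal{H})$ is an algebra norm if $N(TS)\le N(T)N(S)$ for all $T,S\in\mathbb{B}(\mathcal{H})$. For $A\in\mathbb{B}(\mathcal{H})$, ${\rm Re}(A)=\frac{A+A^*}{2}$ and ${\rm Im}(A)=\frac{A-A^*}{2i}$. The generalized numerical radius is $w_N(T)=\sup_{\theta\in\mathbb{R}} N\big({\rm Re}(e^{i\theta}T)\big)$. *)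

From HB Require Import structures.
From mathcomp Require Import all_boot all_order all_algebra.
From mathcomp Require Import all_classical all_reals all_analysis.
From mathcomp Require Import complex.
Import Order.TTheory GRing.Theory Num.Theory ComplexField.
Set Implicit Arguments. Unset Strict Implicit. Unset Printing Implicit Defensive.
Local Open Scope ring_scope.
Local Open Scope complex_scope.
Local Open Scope classical_set_scope.

(* A complex Hilbert space is a
   complete normed R[i]-module H whose norm is induced by an inner product
   ip (linear in the first argument, conjugate symmetric). *)
Definition is_inner_product (R : realType) (H : normedModType R[i])
  (ip : H -> H -> R[i]) : Prop :=
  [/\ (forall (a : R[i]) (x y z : H), ip (a *: x + y) z = a * ip x z + ip y z),
      (forall x y : H, ip y x = (ip x y)^*) &
      (forall x : H, `|x| ^+ 2 = ip x x)].

(* T belongs to B(H): T is linear and continuous (= bounded). *)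
Definition bounded_op (R : realType) (H : normedModType R[i]) (T : H -> H) : Prop :=
  (forall (a : R[i]) (x y : H), T (a *: x + y) = a *: T x + T y) /\ continuous T.

Definition is_adjoint (R : realType) (H : normedModType R[i])
  (ip : H -> H -> R[i]) (T Ts : H -> H) : Prop :=
  forall x y : H, ip (T x) y = ip x (Ts y).

(* N is an algebra norm on B(H) (only its values on B(H) matter). *)
Definition algebra_norm (R : realType) (H : normedModType R[i])
  (N : (H -> H) -> R) : Prop :=
  [/\ (forall A, bounded_op A -> 0 <= N A),
      (forall A, bounded_op A -> N A = 0 -> A = (fun _ => 0)),
      (forall (a : R[i]) A, bounded_op A ->
          (N (fun x => a *: A x))%:C = `|a| * (N A)%:C),
      (forall A B, bounded_op A -> bounded_op B ->
          N (fun x => A x + B x) <= N A + N B) &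
      (forall A B, bounded_op A -> bounded_op B ->
          N (A \o B) <= N A * N B)].

Definition cexp (R : realType) (phi : R) : R[i] := (cos phi) +i* (sin phi).

(* Re(A) = (A + A^* )/2 and Im(A) = (A - A^* )/(2i), given A and its adjoint As. *)
Definition ReOp (R : realType) (H : normedModType R[i]) (A As : H -> H) : H -> H :=
  fun x => (2 : R[i])^-1 *: (A x + As x).
Definition ImOp (R : realType) (H : normedModType R[i]) (A As : H -> H) : H -> H :=
  fun x => (2 * 'i : R[i])^-1 *: (A x - As x).

(* e^{i phi} T, and its adjoint e^{-i phi} T^* = conj(e^{i phi}) T^* *)
Definition rotOp (R : realType) (H : normedModType R[i]) (phi : R) (T : H -> H) : H -> H :=
  fun x => cexp phi *: T x.
Definition rotAdj (R : realType) (H : normedModType R[i]) (phi : R) (Ts : H -> H) : H -> H :=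
  fun x => (cexp phi)^* *: Ts x.

Definition wN (R : realType) (H : normedModType R[i]) (N : (H -> H) -> R)
  (T Ts : H -> H) : R :=
  sup (range (fun theta : R => N (ReOp (rotOp theta T) (rotAdj theta Ts)))).

From HB Require Import structures.
From mathcomp Require Import all_boot all_order all_algebra.
From mathcomp Require Import all_classical all_reals all_analysis.
From mathcomp Require Import complex ring lra.
Import Order.TTheory GRing.Theory Num.Theory ComplexField.
Import numFieldNormedType.Exports.
Set Implicit Arguments. Unset Strict Implicit. Unset Printing Implicit Defensive.
Local Open Scope ring_scope.
Local Open Scope complex_scope.

(** Write R_phi = Re(e^{i phi} T) and I_phi = Im(e^{i phi} T).  Since
    I_phi = R_(phi - pi/2), both N(R_phi) and N(I_phi) are at most w_N(T).
    Expanding squares gives T T^* + T^* T = 2 (R_phi^2 + I_phi^2), hence, by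
    submultiplicativity, N(T T^* + T^* T) <= 2 (N(R_phi)^2 + N(I_phi)^2).  For
    a, b in [0, w] one has |a^2 - b^2| <= 2 w^2 - (a^2 + b^2); taking the
    supremum over phi gives the inequality. *)

Section ComplexScalars.
Variable R : realType.
Implicit Type phi : R.

Lemma inv_2i : (2 * 'i)^-1 = - 'i / 2 :> R[i].
Proof. by apply/eqP; rewrite eq_complex /=; simpc; rewrite !expr2 !mul0r add0r addr0 eqxx. Qed.

Lemma normr_half : `|2^-1 : R[i]| = (2^-1)%:C.
Proof. by rewrite normfV normr_nat fmorphV rmorph_nat. Qed.

Lemma normr_cexp phi : `|cexp phi| = 1.
Proof. by rewrite normc_def /= cos2Dsin2 sqrtr1. Qed.

Lemma normr_cexpJ phi : `|(cexp phi)^*%R| = 1.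
Proof. by rewrite norm_conjC normr_cexp. Qed.

Lemma cexp_mulJ phi : cexp phi * (cexp phi)^* = 1.
Proof. by rewrite -sqr_normc normr_cexp expr1n. Qed.

Lemma cexpB_pihalf phi : cexp (phi - pi / 2) = - 'i * cexp phi.
Proof. by apply/eqP; rewrite eq_complex /= cosBpihalf sinBpihalf; simpc. Qed.

End ComplexScalars.

Section LinearOperators.
Variables (R : realType) (H : normedModType R[i]).
Implicit Types (A B T Ts : H -> H) (k : R[i]) (phi : R).

Definition linear_of A (lA : linear A) : {linear H -> H} :=
  HB.pack A (GRing.isLinear.Build R[i] H H *:%R A lA).

Lemma linear_funD A : linear A -> {morph A : x y / x + y}.
Proof. by move=> lA; exact: linearD (linear_of lA). Qed.

Lemma linear_funZ A : linear A -> forall k, {morph A : x / k *: x}.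
Proof. by move=> lA; exact: linearZZ (linear_of lA). Qed.

Lemma linear_funB A : linear A -> {morph A : x y / x - y}.
Proof. by move=> lA; exact: linearB (linear_of lA). Qed.

Lemma linear_scale k A : linear A -> linear (fun x => k *: A x).
Proof. by move=> lA a x y; rewrite lA scalerDr !scalerA mulrC. Qed.

Lemma bounded_opP A : bounded_op A <->
  linear A /\ exists2 C, 0 < C & forall x, `|A x| <= C * `|x|.
Proof.
split=> [[lA cA] | [lA [C C0 AC]]]; split => //.
  have /(linear_boundedP (linear_of lA)) /pinfty_ex_gt0 [C C0 AC] :=
    @continuous_linear_bounded _ _ _ 0 (linear_of lA) (cA 0).
  by exists C.
apply: (linear_bounded_continuous (linear_of lA)).1; apply/linear_boundedP.
near=> r => x; apply: (le_trans (AC x)); rewrite ler_wpM2r //.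
by near: r; apply: nbhs_pinfty_ge; rewrite gtr0_real.
Unshelve. all: by end_near. Qed.

Lemma bounded_opD A B : bounded_op A -> bounded_op B ->
  bounded_op (fun x => A x + B x).
Proof.
move=> [lA cA] [lB cB]; split => [a x y|x]; last exact: continuousD (cA x) (cB x).
by rewrite lA lB scalerDr addrACA.
Qed.

Lemma bounded_opZ k A : bounded_op A -> bounded_op (fun x => k *: A x).
Proof.
move=> [lA cA]; split; first exact: linear_scale.
by move=> x; apply: continuousZ (cA x); exact: cvg_cst.
Qed.

Lemma bounded_opB A B : bounded_op A -> bounded_op B ->
  bounded_op (fun x => A x - B x).
Proof.
move=> bA bB; under eq_fun do rewrite -scaleN1r.
exact/bounded_opD/bounded_opZ.
Qed.

Lemma bounded_op_comp A B : bounded_op A -> bounded_op B -> bounded_op (A \o B).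
Proof.
move=> [lA cA] [lB cB]; split => [a x y|x]; first by rewrite /= lB lA.
exact: continuous_comp (cB x) (cA (B x)).
Qed.

Lemma ReOp_sqr_add_ImOp_sqr A As : linear A -> linear As -> forall x,
  ReOp A As (ReOp A As x) + ImOp A As (ImOp A As x) = 2^-1 *: (A (As x) + As (A x)).
Proof.
move=> lA lAs x; rewrite /ReOp /ImOp.
rewrite !(linear_funZ lA, linear_funZ lAs, linear_funB lA, linear_funB lAs,
  linear_funD lA, linear_funD lAs) -!scalerDr -!scalerBr !scalerA.
have -> : (2 * 'i)^-1 * (2 * 'i)^-1 = - (2^-1 * 2^-1) :> R[i].
  by rewrite inv_2i mulrACA mulrNN -expr2 sqr_i mulN1r.
rewrite scaleNr -scalerBr.
set a := A (A x); set b := A (As x); set c := As (A x); set d := As (As x).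
have -> : a + b + (c + d) - (a - b - (c - d)) = 2 *: (b + c).
  rewrite !opprD !opprK addrACA (addrACA a) (addrACA c) subrr add0r subrr addr0.
  by rewrite scalerDl !scale1r addrACA.
by rewrite scalerA mulfVK // pnatr_eq0.
Qed.

Lemma rotOp_rotAdj phi T Ts : linear T ->
  forall x, rotOp phi T (rotAdj phi Ts x) = T (Ts x).
Proof.
by move=> lT x; rewrite /rotOp /rotAdj linear_funZ // scalerA cexp_mulJ scale1r.
Qed.

Lemma rotAdj_rotOp phi T Ts : linear Ts ->
  forall x, rotAdj phi Ts (rotOp phi T x) = Ts (T x).
Proof.
by move=> lTs x; rewrite /rotOp /rotAdj linear_funZ // scalerA mulrC cexp_mulJ scale1r.
Qed.

Lemma ImOp_rot phi T Ts : ImOp (rotOp phi T) (rotAdj phi Ts) =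
  ReOp (rotOp (phi - pi / 2) T) (rotAdj (phi - pi / 2) Ts).
Proof.
apply: funext => x; rewrite /ImOp /ReOp /rotOp /rotAdj cexpB_pihalf inv_2i.
rewrite rmorphM rmorphN /= conjCi opprK scalerBr scalerDr !scalerA -scaleNr.
by congr (_ *: _ + _ *: _); ring.
Qed.

Lemma TTs_add_TsT_ReOp_ImOp phi T Ts : linear T -> linear Ts ->
  (fun x => T (Ts x) + Ts (T x)) =
  (fun x => 2 *: (ReOp (rotOp phi T) (rotAdj phi Ts) (ReOp (rotOp phi T) (rotAdj phi Ts) x)
                + ImOp (rotOp phi T) (rotAdj phi Ts) (ImOp (rotOp phi T) (rotAdj phi Ts) x))).
Proof.
move=> lT lTs; apply: funext => x.
have lR : linear (rotOp phi T) := linear_scale _ lT.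
have lRs : linear (rotAdj phi Ts) := linear_scale _ lTs.
rewrite (ReOp_sqr_add_ImOp_sqr lR lRs) scalerA divff ?pnatr_eq0 // scale1r.
by rewrite rotOp_rotAdj // rotAdj_rotOp.
Qed.

End LinearOperators.

Section InnerProduct.
Variables (R : realType) (H : normedModType R[i]) (ip : H -> H -> R[i]).
Hypothesis ipP : is_inner_product ip.

Let ip_left z : {linear H -> R[i] | *%R} :=
  HB.pack (ip^~ z) (GRing.isLinear.Build R[i] H R[i] *%R (ip^~ z)
    (fun a x y => let: And3 ipl _ _ := ipP in ipl a x y z)).

Lemma ipZl a x z : ip (a *: x) z = a * ip x z.
Proof. exact: (linearZ_LR (ip_left z) a x). Qed.

Lemma ipDl x y z : ip (x + y) z = ip x z + ip y z.
Proof. exact: (linearD (ip_left z)). Qed.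

Lemma ipBl x y z : ip (x - y) z = ip x z - ip y z.
Proof. exact: (linearB (ip_left z)). Qed.

Lemma ipC x y : ip y x = (ip x y)^*%C.
Proof. by case: ipP. Qed.

Lemma ipZr a x z : ip z (a *: x) = a^*%C * ip z x.
Proof. by rewrite ipC ipZl rmorphM /= -ipC. Qed.

Lemma ipDr x y z : ip z (x + y) = ip z x + ip z y.
Proof. by rewrite ipC ipDl rmorphD /= -!ipC. Qed.

Lemma ipBr x y z : ip z (x - y) = ip z x - ip z y.
Proof. by rewrite ipC ipBl rmorphB /= -!ipC. Qed.

Lemma ip_self x : ip x x = `|x| ^+ 2.
Proof. by case: ipP. Qed.

Lemma ip_injr u v : (forall z, ip z u = ip z v) -> u = v.
Proof.
move=> uv; apply/eqP; rewrite -subr_eq0 -normr_eq0 -sqrf_eq0.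
by rewrite -ip_self ipBr uv subrr.
Qed.

Lemma normrB_sqr x y : `|x - y| ^+ 2 = `|x| ^+ 2 + `|y| ^+ 2 - (ip x y + ip y x).
Proof. by rewrite -!ip_self ipBl !ipBr; ring. Qed.

Variables T Ts : H -> H.
Hypothesis TTs : is_adjoint ip T Ts.

Lemma adjoint_linear : linear Ts.
Proof.
move=> a x y; apply: ip_injr => z.
by rewrite -TTs ipDr ipZr !TTs -ipZr -ipDr.
Qed.

(* With u = Ts y one has <T u, y> = |u|^2, so expanding 0 <= |C^-1 T u - C y|^2
   yields |u|^2 <= C^2 |y|^2 without appealing to Cauchy-Schwarz. *)
Lemma adjoint_le C : 0 < C -> (forall x, `|T x| <= C * `|x|) ->
  forall y, `|Ts y| <= C * `|y|.
Proof.
move=> C0 TC y; set u := Ts y.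
have CJ : C^*%C = C := conj_Creal (gtr0_real C0).
have ipTy : ip (C^-1 *: T u) (C *: y) = `|u| ^+ 2.
  by rewrite ipZl ipZr CJ mulKf ?gt_eqF // TTs ip_self.
have ipyT : ip (C *: y) (C^-1 *: T u) = `|u| ^+ 2.
  by rewrite ipC ipTy; exact: conj_Creal (rpredX _ (normr_real _)).
have Tu_le : C^-1 * `|T u| <= `|u| by rewrite ler_pdivrMl.
have := exprn_ge0 2 (normr_ge0 (C^-1 *: T u - C *: y)).
rewrite normrB_sqr ipTy ipyT !normrZ !gtr0_norm ?invr_gt0 //.
set a := C^-1 * `|T u|; set b := C * `|y| => sq_ge0.
have a_ge0 : 0 <= a by rewrite mulr_ge0 // invr_ge0 ltW.
have b_ge0 : 0 <= b by rewrite mulr_ge0 // ltW.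
rewrite -(ler_pXn2r (_ : 0 < 2)%N) ?nnegrE // -subr_ge0.
have -> : b ^+ 2 - `|u| ^+ 2 =
  (a ^+ 2 + b ^+ 2 - (`|u| ^+ 2 + `|u| ^+ 2)) + (`|u| ^+ 2 - a ^+ 2) by ring.
by apply: addr_ge0 sq_ge0 _; rewrite subr_ge0 ler_pXn2r ?nnegrE.
Qed.

Lemma adjoint_bounded : bounded_op T -> bounded_op Ts.
Proof.
move=> /bounded_opP[_ [C C0 TC]]; apply/bounded_opP.
by split; [exact: adjoint_linear | exists C => //; exact: adjoint_le].
Qed.

End InnerProduct.

Section AlgebraNorm.
Variables (R : realType) (H : normedModType R[i]) (N : (H -> H) -> R).
Hypothesis normN : algebra_norm N.
Implicit Types (A B : H -> H).

Lemma alg_norm_ge0 A : bounded_op A -> 0 <= N A.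
Proof. by case: normN => ge0 _ _ _ _; exact: ge0. Qed.

Lemma alg_normZ a r A : bounded_op A -> `|a| = r%:C ->
  N (fun x => a *: A x) = r * N A.
Proof.
by case: normN => _ _ normZ _ _ bA ar; apply: complexI; rewrite normZ // ar rmorphM.
Qed.

Lemma alg_normD A B : bounded_op A -> bounded_op B ->
  N (fun x => A x + B x) <= N A + N B.
Proof. by case: normN => _ _ _ normD _; exact: normD. Qed.

Lemma alg_normM A B : bounded_op A -> bounded_op B -> N (A \o B) <= N A * N B.
Proof. by case: normN => _ _ _ _ normM; exact: normM. Qed.

End AlgebraNorm.

Lemma normr_sqrB_le (R : realFieldType) (a b w s : R) :
  0 <= a <= w -> 0 <= b <= w -> s <= 2 * (a ^+ 2 + b ^+ 2) ->
  `|a ^+ 2 - b ^+ 2| <= 2 * (w ^+ 2 - s / 4).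
Proof.
move=> /andP[a0 aw] /andP[b0 bw] s_le.
have a2 : a ^+ 2 <= w ^+ 2 by rewrite ler_pXn2r ?nnegrE // (le_trans a0).
have b2 : b ^+ 2 <= w ^+ 2 by rewrite ler_pXn2r ?nnegrE // (le_trans b0).
rewrite ler_norml; apply/andP; split; lra.
Qed.

Section NumericalRadius.
Variables (R : realType) (H : normedModType R[i]) (ip : H -> H -> R[i]).
Variables (N : (H -> H) -> R) (T Ts : H -> H).
Hypotheses (ipP : is_inner_product ip) (normN : algebra_norm N).
Hypotheses (bT : bounded_op T) (TTs : is_adjoint ip T Ts).

Local Notation ReRot phi := (ReOp (rotOp phi T) (rotAdj phi Ts)).
Local Notation ImRot phi := (ImOp (rotOp phi T) (rotAdj phi Ts)).

Let bTs : bounded_op Ts := adjoint_bounded ipP TTs bT.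

Lemma bounded_op_ReRot phi : bounded_op (ReRot phi).
Proof. by apply/bounded_opZ/bounded_opD; exact: bounded_opZ. Qed.

Lemma bounded_op_ImRot phi : bounded_op (ImRot phi).
Proof. by apply/bounded_opZ/bounded_opB; exact: bounded_opZ. Qed.

Lemma norm_ReRot_le phi : N (ReRot phi) <= 2^-1 * (N T + N Ts).
Proof.
have [bR bRs] := (bounded_opZ (cexp phi) bT, bounded_opZ (cexp phi)^* bTs).
rewrite (alg_normZ normN (bounded_opD bR bRs) (normr_half R)) ler_pM2l ?invr_gt0 ?ltr0n //.
apply: le_trans (alg_normD normN bR bRs) _.
by rewrite (alg_normZ normN bT (normr_cexp _)) (alg_normZ normN bTs (normr_cexpJ _)) !mul1r.
Qed.

Lemma norm_ReRot_le_wN phi : N (ReRot phi) <= wN N T Ts.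
Proof.
apply: ub_le_sup; last by exists phi.
by exists (2^-1 * (N T + N Ts)) => _ [psi _ <-]; exact: norm_ReRot_le.
Qed.

Lemma norm_ImRot_le_wN phi : N (ImRot phi) <= wN N T Ts.
Proof. by rewrite ImOp_rot; exact: norm_ReRot_le_wN. Qed.

Lemma norm_TTs_add_TsT_le phi :
  N (fun x => T (Ts x) + Ts (T x)) <= 2 * (N (ReRot phi) ^+ 2 + N (ImRot phi) ^+ 2).
Proof.
have [lT lTs] := (bT.1, bTs.1).
have [bR bI] := (bounded_op_ReRot phi, bounded_op_ImRot phi).
have [bRR bII] := (bounded_op_comp bR bR, bounded_op_comp bI bI).
have norm2 : `|2 : R[i]| = 2%:C by rewrite normr_nat rmorph_nat.
rewrite (TTs_add_TsT_ReOp_ImOp phi lT lTs) (alg_normZ normN (bounded_opD bRR bII) norm2).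
rewrite ler_pM2l ?ltr0n // !expr2.
apply: le_trans (alg_normD normN bRR bII) _.
by apply: lerD; exact: alg_normM.
Qed.

Lemma normr_sqrB_ReRot_ImRot_le phi :
  `|N (ReRot phi) ^+ 2 - N (ImRot phi) ^+ 2|
    <= 2 * (wN N T Ts ^+ 2 - N (fun x => T (Ts x) + Ts (T x)) / 4).
Proof.
apply: normr_sqrB_le; last exact: norm_TTs_add_TsT_le.
  by rewrite (alg_norm_ge0 normN (bounded_op_ReRot phi)) norm_ReRot_le_wN.
by rewrite (alg_norm_ge0 normN (bounded_op_ImRot phi)) norm_ImRot_le_wN.
Qed.

End NumericalRadius.

Theorem theorem2p3 (R : realType) (H : completeNormedModType R[i])
  (ip : H -> H -> R[i]) (N : (H -> H) -> R) (T Ts : H -> H) :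
  is_inner_product ip -> algebra_norm N ->
  bounded_op T -> is_adjoint ip T Ts ->
  N (fun x => T (Ts x) + Ts (T x)) / 4
  + 2^-1 * sup (range (fun phi : R =>
       `| N (ReOp (rotOp phi T) (rotAdj phi Ts)) ^+ 2
          - N (ImOp (rotOp phi T) (rotAdj phi Ts)) ^+ 2 |))
  <= wN N T Ts ^+ 2.
Proof.
move=> ipP normN bT TTs.
set M := sup _.
suff : M <= 2 * (wN N T Ts ^+ 2 - N (fun x => T (Ts x) + Ts (T x)) / 4) by lra.
apply: ge_sup => [|_ [phi _ <-]]; first by eexists; exists 0.
exact: (normr_sqrB_ReRot_ImRot_le ipP normN bT TTs).
Qed.
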